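(* Let $p\ge 3$ be an odd integer, $\mu>0$ and $\alpha>0$. Let $(x_0,y_0)\in\mathbb{R}^2$ and let $(x,y)\in C^1([0,\infty);\mathbb{R}^2)$ be the global solution of \[ x'(t)=y(t),\qquad y'(t)=-\alpha x(t)^p-\mu y(t),\quad t>0,\qquad x(0)=x_0,\ y(0)=y_0. \] Define \[ \mathcal{E}(t):=\frac12 y(t)^2+\frac{\mu}{2}x(t)y(t)+\frac{\mu^2}{4}x(t)^2+\frac{\alpha}{p+1}x(t)^{p+1}. \] Then there exists a constant $\nu>0$ such that \[ \mathcal{E}'(t)+\nu\,\frac{\mathcal{E}(t)^{\frac{p+1}{2}}}{1+\mathcal{E}(t)^{\frac{p-1}{2}}}\le 0\quad\text{for all } t\ge 0. \]
   Context: The function $\mathcal{E}(t)$ is nonnegative for all $t$ (since $p+1$ is even and $\mathcal{E}(t)=\frac14(y+\mu x)^2+\frac14 y^2+\frac{\alpha}{p+1}x^{p+1}$), so its real powers are well defined. *)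

From Stdlib Require Import Reals.
From Coquelicot Require Import Coquelicot.
Open Scope R_scope.

(* Derivative of f at t relative to the half-line [0, +oo):
   limit of (f s - f t)/(s - t) as s -> t with s >= 0, s <> t.
   For t > 0 this is the usual two-sided derivative, at t = 0 the
   right derivative (as in C^1([0,oo))). *)
Definition has_deriv_nonneg (f : R -> R) (t l : R) : Prop :=
  filterlim (fun s => (f s - f t) / (s - t))
    (within (fun s => 0 <= s /\ s <> t) (locally t)) (locally l).

Definition cont_nonneg (f : R -> R) (t : R) : Prop :=
  filterlim f (within (fun s => 0 <= s) (locally t)) (locally (f t)).

Definition energy (p : nat) (mu alpha : R) (x y : R -> R) (t : R) : R :=
  / 2 * (y t) ^ 2 + mu / 2 * x t * y t + mu ^ 2 / 4 * (x t) ^ 2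
  + alpha / INR (p + 1) * (x t) ^ (p + 1).

From Stdlib Require Import Reals Lra Lia Psatz.
From Coquelicot Require Import Coquelicot.
Open Scope R_scope.

(* Along a solution, E' = -(mu/2) D with D = y^2 + alpha x^(p+1): the cross term
   (mu/2) x y of E is chosen so that the terms in x y cancel.  Since
   E <= D + mu^2 x^2 / 2, either E <= 2 D, and then E^((p+1)/2) <= 2 D E^((p-1)/2),
   or E <= mu^2 x^2, and then E^((p+1)/2) <= mu^(p+1) x^(p+1) <= (mu^(p+1)/alpha) D.
   Hence E^((p+1)/2) / (1 + E^((p-1)/2)) <= (2 + mu^(p+1)/alpha) D, and
   nu = mu / (2 (2 + mu^(p+1)/alpha)) works.  At t = 0, where only one-sided
   derivatives exist, the equations follow from continuity of dx and dy. *)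

Section FilterlimArith.

Context {T : Type} {F : (T -> Prop) -> Prop} {FF : Filter F}.

Lemma filterlim_Rplus (f g : T -> R) (a b : R) :
  filterlim f F (locally a) -> filterlim g F (locally b) ->
  filterlim (fun s => f s + g s) F (locally (a + b)).
Proof.
  intros Hf Hg.
  exact (filterlim_comp_2 f g Rplus Hf Hg (@filterlim_plus R_AbsRing R_NormedModule a b)).
Qed.

Lemma filterlim_Rmult (f g : T -> R) (a b : R) :
  filterlim f F (locally a) -> filterlim g F (locally b) ->
  filterlim (fun s => f s * g s) F (locally (a * b)).
Proof.
  intros Hf Hg.
  exact (filterlim_comp_2 f g Rmult Hf Hg (@filterlim_mult R_AbsRing a b)).
Qed.

End FilterlimArith.

Local Notation punctured_nonneg t := (within (fun s => 0 <= s /\ s <> t) (locally t)).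

Lemma punctured_nonneg_proper (t : R) : 0 <= t -> ProperFilter' (punctured_nonneg t).
Proof.
  intros Ht. constructor; [|apply within_filter, locally_filter].
  intros [[e He] Hball].
  apply (Hball (t + e / 2)); [|split; lra].
  unfold ball; simpl; unfold AbsRing_ball, abs, minus, plus, opp; simpl.
  rewrite Rabs_right; lra.
Qed.

Lemma filterlim_sub_punctured (t : R) :
  filterlim (fun s => s - t) (punctured_nonneg t) (locally 0).
Proof.
  rewrite <- (Rminus_diag t).
  apply filterlim_Rplus; [|apply filterlim_const].
  apply (@filterlim_filter_le_1 _ _ (locally t)).
  - apply filter_le_within.
  - apply filterlim_id.
Qed.

Lemma has_deriv_nonneg_continuous (f : R -> R) (t l : R) :
  has_deriv_nonneg f t l -> filterlim f (punctured_nonneg t) (locally (f t)).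
Proof.
  intros Hf.
  apply filterlim_ext_loc with (fun s => f t + (f s - f t) / (s - t) * (s - t)).
  - exists (mkposreal 1 Rlt_0_1). intros s _ [_ Hs]. field. lra.
  - replace (locally (f t)) with (locally (f t + l * 0)) by (f_equal; ring).
    apply filterlim_Rplus; [apply filterlim_const|].
    apply filterlim_Rmult; [exact Hf|apply filterlim_sub_punctured].
Qed.

Lemma has_deriv_nonneg_const (c t : R) : has_deriv_nonneg (fun _ => c) t 0.
Proof.
  apply filterlim_ext with (fun _ => 0); [intros s; unfold Rdiv; ring|].
  apply filterlim_const.
Qed.

Lemma has_deriv_nonneg_plus (f g : R -> R) (t a b : R) :
  has_deriv_nonneg f t a -> has_deriv_nonneg g t b ->
  has_deriv_nonneg (fun s => f s + g s) t (a + b).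
Proof.
  intros Hf Hg.
  apply filterlim_ext with (fun s => (f s - f t) / (s - t) + (g s - g t) / (s - t)).
  - intros s. unfold Rdiv. ring.
  - apply filterlim_Rplus; assumption.
Qed.

Lemma has_deriv_nonneg_mult (f g : R -> R) (t a b : R) :
  has_deriv_nonneg f t a -> has_deriv_nonneg g t b ->
  has_deriv_nonneg (fun s => f s * g s) t (a * g t + f t * b).
Proof.
  intros Hf Hg.
  apply filterlim_ext with
    (fun s => (f s - f t) / (s - t) * g s + f t * ((g s - g t) / (s - t))).
  - intros s. unfold Rdiv. ring.
  - apply filterlim_Rplus; apply filterlim_Rmult; try assumption.
    + exact (has_deriv_nonneg_continuous g t b Hg).
    + apply filterlim_const.
Qed.

Lemma has_deriv_nonneg_pow (f : R -> R) (t a : R) (n : nat) :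
  has_deriv_nonneg f t a ->
  has_deriv_nonneg (fun s => f s ^ n) t (INR n * f t ^ pred n * a).
Proof.
  intros Hf. induction n as [|n IHn].
  - refine (eq_ind _ _ (has_deriv_nonneg_const 1 t) _ _). simpl. ring.
  - refine (eq_ind _ _ (has_deriv_nonneg_mult _ _ t _ _ Hf IHn) _ _).
    rewrite S_INR. destruct n; simpl; ring.
Qed.

Lemma has_deriv_nonneg_scal (c : R) (f : R -> R) (t a : R) :
  has_deriv_nonneg f t a -> has_deriv_nonneg (fun s => c * f s) t (c * a).
Proof.
  intros Hf.
  refine (eq_ind _ _ (has_deriv_nonneg_mult _ _ t _ _ (has_deriv_nonneg_const c t) Hf) _ _).
  ring.
Qed.

Lemma has_deriv_nonneg_energy (p : nat) (mu alpha : R) (x y : R -> R) (t a b : R) :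
  has_deriv_nonneg x t a -> has_deriv_nonneg y t b ->
  has_deriv_nonneg (energy p mu alpha x y) t
    (y t * b + mu / 2 * (a * y t + x t * b) + mu ^ 2 / 2 * x t * a
     + alpha * x t ^ p * a).
Proof.
  intros Hx Hy.
  pose proof (has_deriv_nonneg_scal (/ 2) _ t _ (has_deriv_nonneg_pow y t b 2 Hy)) as Hy2.
  pose proof (has_deriv_nonneg_mult _ _ t _ _ (has_deriv_nonneg_scal (mu / 2) x t a Hx) Hy)
    as Hxy.
  pose proof (has_deriv_nonneg_scal (mu ^ 2 / 4) _ t _ (has_deriv_nonneg_pow x t a 2 Hx))
    as Hx2.
  pose proof (has_deriv_nonneg_scal (alpha / INR (p + 1)) _ t _
    (has_deriv_nonneg_pow x t a (p + 1) Hx)) as Hxp.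
  refine (eq_ind _ _ (has_deriv_nonneg_plus _ _ t _ _
    (has_deriv_nonneg_plus _ _ t _ _ (has_deriv_nonneg_plus _ _ t _ _ Hy2 Hxy) Hx2) Hxp) _ _).
  replace (pred (p + 1)) with p by lia.
  assert (INR (p + 1) <> 0) by (apply not_0_INR; lia).
  simpl INR; simpl pred. field. assumption.
Qed.

Lemma cont_nonneg_0_eq_lim (f g : R -> R) (l : R) :
  (forall s, 0 < s -> f s = g s) -> cont_nonneg f 0 ->
  filterlim g (punctured_nonneg 0) (locally l) -> f 0 = l.
Proof.
  intros Hfg Hf Hg.
  apply (filterlim_locally_unique (FF := punctured_nonneg_proper 0 (Rle_refl 0)) f).
  - intros P HP. destruct (Hf P HP) as [e He].
    exists e. intros s Hs [Hs0 _]. exact (He s Hs Hs0).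
  - apply filterlim_ext_loc with g; [|exact Hg].
    exists (mkposreal 1 Rlt_0_1). intros s _ [Hs0 Hs].
    symmetry. apply Hfg. lra.
Qed.

Section DampedOscillator.

Variables (p : nat) (mu alpha : R) (x y dx dy : R -> R).
Hypothesis has_deriv_x : forall t, 0 <= t -> has_deriv_nonneg x t (dx t).
Hypothesis has_deriv_y : forall t, 0 <= t -> has_deriv_nonneg y t (dy t).
Hypothesis cont_dx : cont_nonneg dx 0.
Hypothesis cont_dy : cont_nonneg dy 0.
Hypothesis ode_x : forall t, 0 < t -> dx t = y t.
Hypothesis ode_y : forall t, 0 < t -> dy t = - alpha * x t ^ p - mu * y t.

Lemma ode_x_nonneg t : 0 <= t -> dx t = y t.
Proof.
  intros [Ht| <-]; [exact (ode_x t Ht)|].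
  apply (cont_nonneg_0_eq_lim dx y); [exact ode_x|exact cont_dx|].
  exact (has_deriv_nonneg_continuous y 0 _ (has_deriv_y 0 (Rle_refl 0))).
Qed.

Lemma ode_y_nonneg t : 0 <= t -> dy t = - alpha * x t ^ p - mu * y t.
Proof.
  intros [Ht| <-]; [exact (ode_y t Ht)|].
  apply (cont_nonneg_0_eq_lim dy (fun s => - alpha * x s ^ p - mu * y s));
    [exact ode_y|exact cont_dy|].
  pose proof (has_deriv_nonneg_continuous _ 0 _
    (has_deriv_nonneg_pow x 0 _ p (has_deriv_x 0 (Rle_refl 0)))) as Hxp.
  pose proof (has_deriv_nonneg_continuous y 0 _ (has_deriv_y 0 (Rle_refl 0))) as Hy.
  apply filterlim_ext with (fun s => - alpha * x s ^ p + - mu * y s); [intros s; ring|].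
  replace (- alpha * x 0 ^ p - mu * y 0) with (- alpha * x 0 ^ p + - mu * y 0) by ring.
  apply filterlim_Rplus; apply filterlim_Rmult; auto; apply filterlim_const.
Qed.

Lemma energy_dissipation t : 0 <= t ->
  has_deriv_nonneg (energy p mu alpha x y) t
    (- (mu / 2) * (y t ^ 2 + alpha * x t ^ (p + 1))).
Proof.
  intros Ht.
  refine (eq_ind _ _ (has_deriv_nonneg_energy p mu alpha x y t _ _
    (has_deriv_x t Ht) (has_deriv_y t Ht)) _ _).
  rewrite ode_x_nonneg, ode_y_nonneg, pow_add by exact Ht.
  field.
Qed.

End DampedOscillator.

Lemma pow_even (u : R) (n : nat) : Nat.Even n -> u ^ n = (u ^ 2) ^ (n / 2).
Proof.
  intros [m ->]. rewrite <- pow_mult. f_equal.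
  rewrite (Nat.mul_comm 2 m), Nat.div_mul; lia.
Qed.

Lemma pow_odd_succ_nonneg (u : R) (p : nat) : Nat.Odd p -> 0 <= u ^ (p + 1).
Proof.
  intros Hp. rewrite pow_even.
  - apply pow_le, pow2_ge_0.
  - rewrite Nat.add_1_r. apply Nat.Even_succ, Hp.
Qed.

Lemma odd_half_succ (p : nat) : Nat.Odd p -> ((p + 1) / 2 = S ((p - 1) / 2))%nat.
Proof.
  intros [k ->].
  replace (2 * k + 1 + 1)%nat with (S k * 2)%nat by lia.
  replace (2 * k + 1 - 1)%nat with (k * 2)%nat by lia.
  rewrite !Nat.div_mul; lia.
Qed.

Lemma pow_S_div_le (k : nat) (E D Y Q : R) :
  0 <= E -> 0 <= D -> 0 <= Q -> E <= D + Y / 2 -> Y ^ S k <= Q * D ->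
  E ^ S k / (1 + E ^ k) <= (2 + Q) * D.
Proof.
  intros HE HD HQ HEY HY.
  assert (HEk : 0 <= E ^ k) by (apply pow_le; exact HE).
  apply Rle_div_l; [lra|].
  assert (HQD : 0 <= Q * D * (1 + E ^ k)) by (apply Rmult_le_pos; nra).
  destruct (Rle_lt_dec E (2 * D)) as [Hsmall|Hlarge]; simpl.
  - nra.
  - assert (E ^ S k <= Y ^ S k) by (apply pow_incr; lra).
    simpl in *. nra.
Qed.

Lemma energy_nonneg (p : nat) (mu alpha : R) (x y : R -> R) (t : R) :
  Nat.Odd p -> 0 <= alpha -> 0 <= energy p mu alpha x y t.
Proof.
  intros Hp Halpha. unfold energy.
  assert (0 <= alpha / INR (p + 1) * x t ^ (p + 1)).
  { apply Rmult_le_pos; [|exact (pow_odd_succ_nonneg _ _ Hp)].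
    apply Rdiv_le_0_compat; [exact Halpha|apply lt_0_INR; lia]. }
  pose proof (pow2_ge_0 (y t + mu * x t)). pose proof (pow2_ge_0 (y t)).
  nra.
Qed.

Lemma energy_le_dissipation (p : nat) (mu alpha : R) (x y : R -> R) (t : R) :
  Nat.Odd p -> 0 <= alpha ->
  energy p mu alpha x y t <= y t ^ 2 + alpha * x t ^ (p + 1) + mu ^ 2 * x t ^ 2 / 2.
Proof.
  intros Hp Halpha. unfold energy.
  assert (alpha / INR (p + 1) * x t ^ (p + 1) <= alpha * x t ^ (p + 1)).
  { apply Rmult_le_compat_r; [exact (pow_odd_succ_nonneg _ _ Hp)|].
    apply Rle_div_l; [apply lt_0_INR; lia|].
    rewrite plus_INR. pose proof (pos_INR p). simpl. nra. }
  pose proof (pow2_ge_0 (y t - mu * x t / 2)). pose proof (pow2_ge_0 (mu * x t)).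
  nra.
Qed.

Lemma pow_half_sq_le (p : nat) (mu alpha u v : R) :
  Nat.Odd p -> 0 < alpha ->
  (mu ^ 2 * u ^ 2) ^ ((p + 1) / 2) <= mu ^ (p + 1) / alpha * (v ^ 2 + alpha * u ^ (p + 1)).
Proof.
  intros Hp Halpha.
  assert (Heven : Nat.Even (p + 1)) by (rewrite Nat.add_1_r; apply Nat.Even_succ, Hp).
  rewrite Rpow_mult_distr, <- !pow_even by exact Heven.
  assert (0 <= mu ^ (p + 1) / alpha * v ^ 2).
  { apply Rmult_le_pos; [|apply pow2_ge_0].
    apply Rdiv_le_0_compat; [exact (pow_odd_succ_nonneg _ _ Hp)|exact Halpha]. }
  replace (mu ^ (p + 1) * u ^ (p + 1)) with (mu ^ (p + 1) / alpha * (alpha * u ^ (p + 1)))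
    by (field; lra).
  lra.
Qed.

Theorem proposition1 (p : nat) (mu alpha x0 y0 : R) (x y dx dy : R -> R) :
  (3 <= p)%nat -> Nat.Odd p -> 0 < mu -> 0 < alpha ->
  (* (x,y) is C^1 on [0,oo) with derivatives dx, dy *)
  (forall t, 0 <= t -> has_deriv_nonneg x t (dx t)) ->
  (forall t, 0 <= t -> has_deriv_nonneg y t (dy t)) ->
  (forall t, 0 <= t -> cont_nonneg dx t) ->
  (forall t, 0 <= t -> cont_nonneg dy t) ->
  (* the ODE for t > 0 and the initial data *)
  (forall t, 0 < t -> dx t = y t) ->
  (forall t, 0 < t -> dy t = - alpha * (x t) ^ p - mu * y t) ->
  x 0 = x0 -> y 0 = y0 ->
  exists nu : R, 0 < nu /\
    forall t, 0 <= t ->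
      exists dE : R,
        has_deriv_nonneg (energy p mu alpha x y) t dE /\
        dE + nu * (energy p mu alpha x y t) ^ ((p + 1) / 2)
               / (1 + (energy p mu alpha x y t) ^ ((p - 1) / 2)) <= 0.
Proof.
  intros _ Hp Hmu Halpha Hx Hy Hcx Hcy Hox Hoy _ _.
  set (Q := mu ^ (p + 1) / alpha).
  assert (HQ : 0 <= Q) by (apply Rdiv_le_0_compat; [apply pow_le|]; lra).
  set (nu := mu / (2 * (2 + Q))).
  assert (Hnu : 0 < nu) by (apply Rdiv_lt_0_compat; lra).
  assert (Hnu_Q : nu * (2 + Q) = mu / 2) by (unfold nu; field; lra).
  exists nu. split; [exact Hnu|].
  intros t Ht.
  set (E := energy p mu alpha x y t).
  set (D := y t ^ 2 + alpha * x t ^ (p + 1)).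
  exists (- (mu / 2) * D). split.
  { exact (energy_dissipation p mu alpha x y dx dy Hx Hy (Hcx 0 (Rle_refl 0))
      (Hcy 0 (Rle_refl 0)) Hox Hoy t Ht). }
  assert (HD : 0 <= D).
  { pose proof (pow2_ge_0 (y t)). pose proof (pow_odd_succ_nonneg (x t) p Hp).
    unfold D. nra. }
  assert (Hratio : E ^ ((p + 1) / 2) / (1 + E ^ ((p - 1) / 2)) <= (2 + Q) * D).
  { rewrite odd_half_succ by exact Hp.
    apply (pow_S_div_le _ _ _ (mu ^ 2 * x t ^ 2)); try assumption.
    - apply energy_nonneg; [exact Hp|lra].
    - apply energy_le_dissipation; [exact Hp|lra].
    - rewrite <- odd_half_succ by exact Hp. apply pow_half_sq_le; assumption. }
  unfold Rdiv in *. nra.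
Qed.
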